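(* Let $M'$ be a $4m$-dimensional quaternionic space form of constant quaternionic sectional curvature $4c$, endowed with a Ricci quarter-symmetric metric connection $\nabla''$ (in the setting described in the context), and let $N'$ be an $n$-dimensional submanifold of $M'$ with the induced connection. Then at every point $p\in N'$ the scalar curvature $\tau$ of $N'$ satisfies $$\tau(p)\le \frac{n-1}{2}\left(n\|H\|^2+c\Big\{(n-1)+3\sum_{k=1}^{3}\frac{\|P_k\|^2}{n}\Big\}\frac{n-2\,\operatorname{tr}M\,(n-1)}{n-1}\right).$$
   Context: Let $(M',g)$ be a $4m$-dimensional quaternionic Kaehler manifold with local almost Hermitian structures $\psi_1,\psi_2,\psi_3$ ($\psi_i^2=-I$, $\psi_1\psi_2=\psi_3=-\psi_2\psi_1$ and cyclically) which is a quaternionic space form of constant quaternionic sectional curvature $4c$, i.e. its Levi-Civita connection $\nabla^*$ has curvature $R^*(X,Y)Z=c\{g(Y,Z)X-g(X,Z)Y+\sum_{i=1}^3(g(\psi_iY,Z)\psi_iX-g(\psi_iX,Z)\psi_iY-2g(\psi_iX,Y)\psi_iZ)\}$. $M'$ carries the Ricci quarter-symmetric metric connection $\nabla''_XY=\nabla^*_XY+\eta(Y)LX-S(X,Y)P$, where $S$ is the Ricci tensor of $\nabla^*$, $L$ is the $(1,1)$-tensor with $g(LX,Y)=S(X,Y)$, $\eta$ is a 1-form and $P$ the unit vector field with $g(P,X)=\eta(X)$. Put $QX=\nabla^*_XP-\eta(LX)P+\tfrac12\eta(P)LX$ and $M(X,Y)=g(QX,Y)$. $N'$ is an $n$-dimensional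 submanifold with induced connection $\nabla$ (curvature $R$) and second fundamental form $h$; $\{e_1,\dots,e_n\}$ and $\{e_{n+1},\dots,e_{4m}\}$ are orthonormal bases of $T_pN'$ and $T_p^\perp N'$. Write $\psi_kX=P_kX+F_kX$ (tangential and normal parts), $\|P_k\|^2=\sum_{i,j=1}^n g(P_ke_i,e_j)^2$, and $\operatorname{tr}M=\sum_{i=1}^n M(e_i,e_i)$ (denoted $m$ in the paper). Following the paper's standing assumption $S=(\tau'/n)g$, the curvature of $\nabla''$ is $R''(X,Y)Z=R^*(X,Y)Z-\frac{\tau'}{n}\{M(Y,Z)X-M(X,Z)Y+g(Y,Z)QX-g(X,Z)QY\}$ with $\tau'=c\{n(n-1)+3\sum_{k=1}^3\|P_k\|^2\}$, and the Gauss equation $g(R''(X,Y)Z,W)=g(R(X,Y)Z,W)+g(h(X,Z),h(Y,W))-g(h(X,W),h(Y,Z))$ holds for tangent $X,Y,Z,W$. The sectional curvature is $K(e_i\wedge e_j)=g(R(e_i,e_j)e_j,e_i)$, the scalar curvature $\tau(p)=\sum_{1\le i<j\le n}K(e_i\wedge e_j)$, and the mean curvature vector $H=\frac1n\sum_{i=1}^n h(e_i,e_i)$. *)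

(* Pointwise (linear-algebraic) model of the setting at p:
   T_p M' = column vectors 'cV[R]_(4m) with the standard inner product g. *)
From HB Require Import structures.
From mathcomp Require Import all_boot all_order all_algebra.
Set Implicit Arguments. Unset Strict Implicit. Unset Printing Implicit Defensive.
Import Order.TTheory GRing.Theory Num.Theory.
Local Open Scope ring_scope.

Definition gdot (R : realFieldType) (N : nat) (X Y : 'cV[R]_N) : R := (X^T *m Y) 0 0.

Definition Rstar (R : realFieldType) (N : nat) (c : R) (p1 p2 p3 : 'M[R]_N)
    (X Y Z : 'cV[R]_N) : 'cV[R]_N :=
  c *: (gdot Y Z *: X - gdot X Z *: Y +
        \sum_(psi <- [:: p1; p2; p3])
          (gdot (psi *m Y) Z *: (psi *m X) - gdot (psi *m X) Z *: (psi *m Y)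
           - (2 * gdot (psi *m X) Y) *: (psi *m Z))).

(* ||P_k||^2 = sum_{i,j} g(P_k e_i, e_j)^2 ; since e_j is tangent,
   g(P_k e_i, e_j) = g(psi_k e_i, e_j). *)
Definition normP2 (R : realFieldType) (N n : nat) (e : 'I_n -> 'cV[R]_N)
    (psi : 'M[R]_N) : R :=
  \sum_(i < n) \sum_(j < n) (gdot (psi *m e i) (e j)) ^+ 2.

Definition tauprime (R : realFieldType) (N n : nat) (c : R) (e : 'I_n -> 'cV[R]_N)
    (p1 p2 p3 : 'M[R]_N) : R :=
  c * (n%:R * (n%:R - 1) + 3 * (normP2 e p1 + normP2 e p2 + normP2 e p3)).

(* Q X = nabla*_X P - eta(L X) P + 1/2 eta(P) L X, with L = (tau'/n) Id
   (standing assumption S = (tau'/n) g) and eta = g(P, .);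
   DP is the endomorphism X |-> nabla*_X P at p. *)
Definition Qop (R : realFieldType) (N : nat) (n : nat) (tp : R) (P : 'cV[R]_N)
    (DP : 'M[R]_N) (X : 'cV[R]_N) : 'cV[R]_N :=
  DP *m X - gdot P ((tp / n%:R) *: X) *: P + (2^-1 * gdot P P) *: ((tp / n%:R) *: X).

Definition Mform (R : realFieldType) (N : nat) (n : nat) (tp : R) (P : 'cV[R]_N)
    (DP : 'M[R]_N) (X Y : 'cV[R]_N) : R :=
  gdot (Qop n tp P DP X) Y.

Definition Rdd (R : realFieldType) (N : nat) (n : nat) (c tp : R)
    (p1 p2 p3 : 'M[R]_N) (P : 'cV[R]_N) (DP : 'M[R]_N)
    (X Y Z : 'cV[R]_N) : 'cV[R]_N :=
  Rstar c p1 p2 p3 X Y Z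
  - (tp / n%:R) *: (Mform n tp P DP Y Z *: X - Mform n tp P DP X Z *: Y
                    + gdot Y Z *: Qop n tp P DP X - gdot X Z *: Qop n tp P DP Y).

Definition trM (R : realFieldType) (N n : nat) (tp : R) (P : 'cV[R]_N)
    (DP : 'M[R]_N) (e : 'I_n -> 'cV[R]_N) : R :=
  \sum_(i < n) Mform n tp P DP (e i) (e i).

Definition meanH (R : realFieldType) (N n : nat) (h : 'I_n -> 'I_n -> 'cV[R]_N)
    : 'cV[R]_N :=
  n%:R^-1 *: \sum_(i < n) h i i.

(* scalar curvature tau(p) = sum_{i<j} K(e_i /\ e_j),
   K(e_i /\ e_j) = g(R(e_i,e_j)e_j, e_i) = Rn i j j i *)
Definition scal (R : realFieldType) (n : nat) (Rn : 'I_n -> 'I_n -> 'I_n -> 'I_n -> R)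
    : R :=
  \sum_(i < n) \sum_(j < n | (i < j)%N) Rn i j j i.

From HB Require Import structures.
From mathcomp Require Import all_boot all_order all_algebra.
From mathcomp Require Import ring lra.
Set Implicit Arguments. Unset Strict Implicit. Unset Printing Implicit Defensive.
Import Order.TTheory GRing.Theory Num.Theory.
Local Open Scope ring_scope.

(** Since each psi_k is an isometry with psi_k^2 = -1, it is skew-adjoint, so for
    orthonormal tangent e_i, e_j the sectional curvature of nabla'' is
    c (1 + 3 sum_k g(psi_k e_i, e_j)^2) - (tau'/n) (M(e_i,e_i) + M(e_j,e_j)).
    Summing the Gauss equation over the pairs i < j gives
    2 tau = tau' - 2 (n-1) (tau'/n) tr M + n^2 |H|^2 - |h|^2,
    and |h|^2 >= sum_i |h(e_i,e_i)|^2 >= n |H|^2 by Cauchy-Schwarz. *)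

Section InnerProduct.
Variables (R : realFieldType) (N : nat).
Implicit Types (X Y Z : 'cV[R]_N) (a : R).

Lemma gdotE X Y : gdot X Y = \sum_k X k 0 * Y k 0.
Proof. by rewrite /gdot mxE; apply: eq_bigr => k _; rewrite mxE. Qed.

Lemma gdotC X Y : gdot X Y = gdot Y X.
Proof. by rewrite !gdotE; apply: eq_bigr => k _; rewrite mulrC. Qed.

Lemma gdotDl X Y Z : gdot (X + Y) Z = gdot X Z + gdot Y Z.
Proof. by rewrite /gdot linearD mulmxDl mxE. Qed.

Lemma gdotZl a X Z : gdot (a *: X) Z = a * gdot X Z.
Proof. by rewrite /gdot linearZ -scalemxAl mxE. Qed.

Lemma gdotNl X Z : gdot (- X) Z = - gdot X Z.
Proof. by rewrite -scaleN1r gdotZl mulN1r. Qed.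

Lemma gdotBl X Y Z : gdot (X - Y) Z = gdot X Z - gdot Y Z.
Proof. by rewrite gdotDl gdotNl. Qed.

Lemma gdotDr X Y Z : gdot Z (X + Y) = gdot Z X + gdot Z Y.
Proof. by rewrite gdotC gdotDl !(gdotC Z). Qed.

Lemma gdotZr a X Z : gdot X (a *: Z) = a * gdot X Z.
Proof. by rewrite gdotC gdotZl gdotC. Qed.

Lemma gdotNr X Z : gdot X (- Z) = - gdot X Z.
Proof. by rewrite gdotC gdotNl gdotC. Qed.

Lemma gdotBr X Y Z : gdot Z (X - Y) = gdot Z X - gdot Z Y.
Proof. by rewrite gdotDr gdotNr. Qed.

Lemma gdot0l Z : gdot 0 Z = 0.
Proof. by rewrite -(scale0r 0) gdotZl mul0r. Qed.

Lemma gdot_suml I (r : seq I) (P : pred I) (F : I -> 'cV[R]_N) Y :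
  gdot (\sum_(i <- r | P i) F i) Y = \sum_(i <- r | P i) gdot (F i) Y.
Proof. exact: (big_morph (fun X => gdot X Y) (fun X Z => gdotDl X Z Y) (gdot0l Y)). Qed.

Lemma gdot_sumr I (r : seq I) (P : pred I) (F : I -> 'cV[R]_N) Y :
  gdot Y (\sum_(i <- r | P i) F i) = \sum_(i <- r | P i) gdot Y (F i).
Proof. by rewrite gdotC gdot_suml; apply: eq_bigr => i _; rewrite gdotC. Qed.

Lemma gdotxx_ge0 X : 0 <= gdot X X.
Proof. by rewrite gdotE sumr_ge0 // => k _; rewrite -expr2 sqr_ge0. Qed.

Lemma gdot_sum_le n (v : 'I_n -> 'cV[R]_N) :
  gdot (\sum_i v i) (\sum_i v i) <= n%:R * \sum_i gdot (v i) (v i).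
Proof.
set V := \sum_i v i; set S := \sum_i gdot (v i) (v i).
have const_sum (a : R) : n%:R * a = \sum_(j < n) a.
  by rewrite sumr_const card_ord mulr_natl.
have row i : \sum_j gdot (v i - v j) (v i - v j)
    = n%:R * gdot (v i) (v i) + S - 2 * gdot (v i) V.
  rewrite gdot_sumr mulr_sumr const_sum -big_split /= -sumrB; apply: eq_bigr => j _.
  by rewrite !(gdotBl, gdotBr) (gdotC (v j)); ring.
have : 0 <= \sum_i \sum_j gdot (v i - v j) (v i - v j).
  by apply: sumr_ge0 => i _; apply: sumr_ge0 => j _; apply: gdotxx_ge0.
rewrite (eq_bigr _ (fun i _ => row i)) sumrB big_split /= -!mulr_sumr -gdot_suml.
by rewrite -/S -/V sumr_const card_ord -mulr_natl; lra.
Qed.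

Lemma gdot_sum_diag_le n (h : 'I_n -> 'I_n -> 'cV[R]_N) :
  gdot (\sum_i h i i) (\sum_i h i i) <= n%:R * \sum_i \sum_j gdot (h i j) (h i j).
Proof.
apply: le_trans (gdot_sum_le _) _; apply: ler_wpM2l; first exact: ler0n.
apply: ler_sum => i _; rewrite (bigD1 i) //= lerDl.
by apply: sumr_ge0 => j _; apply: gdotxx_ge0.
Qed.

End InnerProduct.

Lemma sum_sym_ltn (V : nmodType) n (f : 'I_n -> 'I_n -> V) :
  (forall i j, f i j = f j i) ->
  \sum_i \sum_j f i j
  = (\sum_(i < n) \sum_(j < n | (i < j)%N) f i j) *+ 2 + \sum_i f i i.
Proof.
move=> fC.
have row i : \sum_j f i j
    = \sum_(j < n | (i < j)%N) f i j + \sum_(j < n | (j < i)%N) f i j + f i i.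
  rewrite (bigD1 i) //= addrC (bigID (fun j : 'I_n => (i < j)%N)) /=.
  by congr (_ + _ + _); apply: eq_bigl => j; rewrite -val_eqE; case: ltngtP.
have lower : \sum_(i < n) \sum_(j < n | (j < i)%N) f i j
             = \sum_(i < n) \sum_(j < n | (i < j)%N) f i j.
  by rewrite (exchange_big_dep predT) //=; apply: eq_bigr => i _; apply: eq_bigr.
by rewrite (eq_bigr _ (fun i _ => row i)) !big_split /= lower mulr2n.
Qed.

Section SkewAdjoint.
Variables (R : realFieldType) (N : nat).
Implicit Types (X Y : 'cV[R]_N) (p : 'M[R]_N).

Definition skew_adjoint p := forall X Y, gdot (p *m X) Y = - gdot X (p *m Y).

Lemma isometry_skew_adjoint p :
  (forall X Y, gdot (p *m X) (p *m Y) = gdot X Y) -> p *m p = - 1%:M ->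
  skew_adjoint p.
Proof.
by move=> p_iso p2 X Y; rewrite -(p_iso X) mulmxA p2 mulNmx mul1mx gdotNr opprK.
Qed.

Lemma skew_adjoint_gdot_swap p : skew_adjoint p ->
  forall X Y, gdot (p *m Y) X = - gdot (p *m X) Y.
Proof. by move=> p_skew X Y; rewrite p_skew gdotC. Qed.

Lemma skew_adjoint_gdotxx p : skew_adjoint p -> forall X, gdot (p *m X) X = 0.
Proof. by move=> p_skew X; have := p_skew X X; rewrite gdotC; lra. Qed.

End SkewAdjoint.

Section SectionalCurvature.
Variables (R : realFieldType) (N : nat) (c : R) (p1 p2 p3 : 'M[R]_N).
Hypotheses (p1_skew : skew_adjoint p1) (p2_skew : skew_adjoint p2)
  (p3_skew : skew_adjoint p3).
Variables X Y : 'cV[R]_N.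
Hypotheses (X_unit : gdot X X = 1) (Y_unit : gdot Y Y = 1) (XY_orth : gdot X Y = 0).

Lemma Rstar_sectional :
  gdot (Rstar c p1 p2 p3 X Y Y) X
  = c * (1 + 3 * (gdot (p1 *m X) Y ^+ 2 + gdot (p2 *m X) Y ^+ 2
                  + gdot (p3 *m X) Y ^+ 2)).
Proof.
rewrite /Rstar !big_cons big_nil !(gdotBl, gdotDl, gdotZl, gdot0l).
rewrite X_unit Y_unit XY_orth (gdotC Y X) XY_orth.
rewrite !(skew_adjoint_gdotxx p1_skew, skew_adjoint_gdotxx p2_skew,
          skew_adjoint_gdotxx p3_skew).
rewrite (skew_adjoint_gdot_swap p1_skew X Y) (skew_adjoint_gdot_swap p2_skew X Y)
        (skew_adjoint_gdot_swap p3_skew X Y).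
ring.
Qed.

Lemma Rdd_sectional n tp P DP :
  gdot (Rdd n c tp p1 p2 p3 P DP X Y Y) X
  = c * (1 + 3 * (gdot (p1 *m X) Y ^+ 2 + gdot (p2 *m X) Y ^+ 2
                  + gdot (p3 *m X) Y ^+ 2))
    - tp / n%:R * (Mform n tp P DP Y Y + Mform n tp P DP X X).
Proof.
rewrite /Rdd /Mform; set QX := Qop n tp P DP X; set QY := Qop n tp P DP Y.
rewrite gdotBl Rstar_sectional gdotZl !(gdotBl, gdotDl, gdotZl).
by rewrite X_unit Y_unit XY_orth (gdotC Y X) XY_orth; ring.
Qed.

End SectionalCurvature.

Section GaussEquation.
Variables (R : realFieldType) (N n : nat) (c : R) (p1 p2 p3 : 'M[R]_N).
Variables (P : 'cV[R]_N) (DP : 'M[R]_N) (e : 'I_n -> 'cV[R]_N).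
Variables (h : 'I_n -> 'I_n -> 'cV[R]_N) (Rn : 'I_n -> 'I_n -> 'I_n -> 'I_n -> R).
Hypotheses (p1_skew : skew_adjoint p1) (p2_skew : skew_adjoint p2)
  (p3_skew : skew_adjoint p3).
Hypothesis e_orthonormal : forall i j, gdot (e i) (e j) = (i == j)%:R.
Hypothesis h_sym : forall i j, h i j = h j i.

Let tp := tauprime c e p1 p2 p3.
Let ric := tp / n%:R.
Let M i := Mform n tp P DP (e i) (e i).
Let s i j := gdot (p1 *m e i) (e j) ^+ 2 + gdot (p2 *m e i) (e j) ^+ 2
             + gdot (p3 *m e i) (e j) ^+ 2.

Hypothesis gauss : forall i j k l,
  gdot (Rdd n c tp p1 p2 p3 P DP (e i) (e j) (e k)) (e l)
  = Rn i j k l + gdot (h i k) (h j l) - gdot (h i l) (h j k).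

Let sec i j := c + 3 * c * s i j - ric * M i - ric * M j
               - gdot (h i j) (h i j) + gdot (h i i) (h j j).

Lemma sectional_gauss i j : i != j -> Rn i j j i = sec i j.
Proof.
move=> ij; have := gauss i j j i; rewrite (h_sym j i).
rewrite Rdd_sectional ?e_orthonormal ?eqxx ?(negbTE ij) //.
rewrite /sec /s /ric /M; lra.
Qed.

Lemma sec_sym i j : sec i j = sec j i.
Proof.
rewrite /sec /s (skew_adjoint_gdot_swap p1_skew) (skew_adjoint_gdot_swap p2_skew).
rewrite (skew_adjoint_gdot_swap p3_skew) !sqrrN (h_sym j i) (gdotC (h j j)); ring.
Qed.

Lemma sec_diag i : sec i i = c - 2 * ric * M i.
Proof.
rewrite /sec /s !(skew_adjoint_gdotxx p1_skew, skew_adjoint_gdotxx p2_skew,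
                  skew_adjoint_gdotxx p3_skew).
ring.
Qed.

Let S := normP2 e p1 + normP2 e p2 + normP2 e p3.
Let T := trM tp P DP e.
Let A := gdot (\sum_i h i i) (\sum_i h i i).
Let B := \sum_i \sum_j gdot (h i j) (h i j).

Lemma sum_sec :
  \sum_i \sum_j sec i j = c * n%:R ^+ 2 + 3 * c * S - 2 * ric * n%:R * T - B + A.
Proof.
have sumS : \sum_i \sum_j s i j = S.
  by rewrite /S /normP2 -!big_split; apply: eq_bigr => i _; rewrite -!big_split.
have sumA : \sum_i \sum_j gdot (h i i) (h j j) = A.
  by rewrite /A gdot_suml; apply: eq_bigr => i _; rewrite gdot_sumr.
have sumT : \sum_(i < n) \sum_(j < n) M j = n%:R * T.
  by rewrite sumr_const card_ord mulr_natl.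
have sumT' : \sum_(i < n) \sum_(j < n) M i = n%:R * T.
  by rewrite /T /trM mulr_sumr; apply: eq_bigr => i _; rewrite sumr_const card_ord mulr_natl.
rewrite /sec.
under eq_bigr => i _ do rewrite !(big_split, sumrN) /= -!mulr_sumr.
rewrite !(big_split, sumrN) /= -!mulr_sumr -/B sumA sumS sumT sumT'.
by rewrite !sumr_const !card_ord; ring.
Qed.

Lemma scal_twice : scal Rn *+ 2 = tp - 2 * (n%:R - 1) * ric * T + A - B.
Proof.
have scal_sec : scal Rn = \sum_(i < n) \sum_(j < n | (i < j)%N) sec i j.
  apply: eq_bigr => i _; apply: eq_bigr => j ij; apply: sectional_gauss.
  by apply: contraTneq ij => ->; rewrite ltnn.
have sum_diag : \sum_i sec i i = c * n%:R - 2 * ric * T.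
  rewrite (eq_bigr _ (fun i _ => sec_diag i)) sumrB sumr_const card_ord.
  by rewrite -mulr_sumr mulr_natr.
have /eqP := sum_sym_ltn sec_sym.
rewrite sum_sec sum_diag -scal_sec -subr_eq => /eqP <-.
rewrite /tp /tauprime -/S; ring.
Qed.

End GaussEquation.

Lemma chen_bound_algebra (R : realFieldType) (n c S T A B tau : R) : 1 < n ->
  tau *+ 2 = c * (n * (n - 1) + 3 * S)
             - 2 * (n - 1) * (c * (n * (n - 1) + 3 * S) / n) * T + A - B ->
  A <= n * B ->
  tau <= (n - 1) / 2 * (n * (n^-1 * (n^-1 * A))
                        + c * ((n - 1) + 3 * (S / n)) * ((n - 2 * T * (n - 1)) / (n - 1))).
Proof.
move=> n_gt1 tau2 AB.
have n_neq0 : n != 0 by rewrite gt_eqF // (lt_trans ltr01).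
have n1_neq0 : n - 1 != 0 by rewrite subr_eq0 gt_eqF.
have AnB : A / n <= B by rewrite ler_pdivrMr ?(lt_trans ltr01) // mulrC.
suff -> : (n - 1) / 2 * (n * (n^-1 * (n^-1 * A))
            + c * ((n - 1) + 3 * (S / n)) * ((n - 2 * T * (n - 1)) / (n - 1)))
          = tau + (B - A / n) / 2 by lra.
have -> : tau = tau *+ 2 / 2 by rewrite mulr2n; lra.
rewrite tau2; field; exact/andP.
Qed.

Theorem theorem1 (R : realFieldType) (m n : nat) (c : R)
    (p1 p2 p3 : 'M[R]_(4 * m)) (P : 'cV[R]_(4 * m)) (DP : 'M[R]_(4 * m))
    (e : 'I_n -> 'cV[R]_(4 * m)) (h : 'I_n -> 'I_n -> 'cV[R]_(4 * m))
    (Rn : 'I_n -> 'I_n -> 'I_n -> 'I_n -> R) :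
  (2 <= n)%N ->
  (* quaternionic structure: psi_i^2 = -I, psi1 psi2 = psi3 = - psi2 psi1, cyclically *)
  p1 *m p1 = - 1%:M -> p2 *m p2 = - 1%:M -> p3 *m p3 = - 1%:M ->
  p1 *m p2 = p3 -> p2 *m p1 = - p3 ->
  p2 *m p3 = p1 -> p3 *m p2 = - p1 ->
  p3 *m p1 = p2 -> p1 *m p3 = - p2 ->
  (* almost Hermitian *)
  (forall X Y, gdot (p1 *m X) (p1 *m Y) = gdot X Y) ->
  (forall X Y, gdot (p2 *m X) (p2 *m Y) = gdot X Y) ->
  (forall X Y, gdot (p3 *m X) (p3 *m Y) = gdot X Y) ->
  (* P unit vector field, DP = (X |-> nabla*_X P) at p *)
  gdot P P = 1 ->
  (forall X, gdot (DP *m X) P = 0) ->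
  (* e_1..e_n orthonormal basis of T_p N' *)
  (forall i j, gdot (e i) (e j) = (i == j)%:R) ->
  (* second fundamental form: symmetric, normal-valued *)
  (forall i j, h i j = h j i) ->
  (forall i j k, gdot (h i j) (e k) = 0) ->
  (* Gauss equation, Rn i j k l = g(R(e_i,e_j)e_k, e_l) *)
  (forall i j k l,
     gdot (Rdd n c (tauprime c e p1 p2 p3) p1 p2 p3 P DP (e i) (e j) (e k)) (e l)
     = Rn i j k l + gdot (h i k) (h j l) - gdot (h i l) (h j k)) ->
  scal Rn <=
    (n%:R - 1) / 2 *
      (n%:R * gdot (meanH h) (meanH h)
       + c * ((n%:R - 1) + 3 * ((normP2 e p1 + normP2 e p2 + normP2 e p3) / n%:R))
           * ((n%:R - 2 * trM (tauprime c e p1 p2 p3) P DP e * (n%:R - 1)) / (n%:R - 1))).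
Proof.
(* Only psi_k^2 = -1 and the almost Hermitian property enter the curvature
   computation. *)
move=> n_ge2 p1_sq p2_sq p3_sq _ _ _ _ _ _ p1_iso p2_iso p3_iso _ _ e_on h_sym _ gauss.
have twice := scal_twice (isometry_skew_adjoint p1_iso p1_sq)
  (isometry_skew_adjoint p2_iso p2_sq) (isometry_skew_adjoint p3_iso p3_sq)
  e_on h_sym gauss.
rewrite /meanH gdotZl gdotZr.
by apply: chen_bound_algebra twice (gdot_sum_diag_le h); rewrite ltr1n.
Qed.
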